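(* Let $X$ be a compact metric space and $F\colon X\to 2^X$ a set-valued mapping such that the set of points of $X$ having at least one periodic orbit is dense in $X$. Then there exists an $F$-invariant Borel probability measure with full support; consequently the set of $F$-invariant measures with full support is a dense $G_\delta$ subset of the space of $F$-invariant Borel probability measures on $X$ (with the weak$^*$ topology).
   Context: $2^X$ is the space of nonempty closed subsets of $X$; a set-valued mapping is an upper semicontinuous $F\colon X\to 2^X$; $F^{-1}(B)=\{y\in X: F(y)\cap B\neq\emptyset\}$. An orbit of $x$ is a sequence $(x_j)_{j=0}^\infty$ with $x_0=x$, $x_{j+1}\in F(x_j)$; it is periodic if there is $p\in\mathbb{N}$ with $x_{j+p}=x_j$ for all $j\ge0$. A Borel probability measure $\mu$ on $X$ is $F$-invariant if $\mu(B)\le\mu(F^{-1}(B))$ for every Borel set $B$; it has full support if $\mu(U)>0$ for every nonempty open $U$. *)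

From HB Require Import structures.
From mathcomp Require Import all_boot all_order all_algebra.
From mathcomp Require Import all_classical all_reals all_analysis.
Set Implicit Arguments. Unset Strict Implicit. Unset Printing Implicit Defensive.
Import Order.TTheory GRing.Theory Num.Theory.
Import numFieldNormedType.Exports.
Local Open Scope classical_set_scope.
Local Open Scope ring_scope.

Notation BorelOf X := (g_sigma_algebraType (@open X)).

Section SetValued.
Context {X : topologicalType}.

Definition usc (F : X -> set X) : Prop :=
  forall U : set X, open U -> open [set x | F x `<=` U].

Definition set_valued_map (F : X -> set X) : Prop :=
  (forall x, F x !=set0 /\ closed (F x)) /\ usc F.

Definition preimF (F : X -> set X) (B : set X) : set X :=
  [set y | F y `&` B !=set0].

Definition is_orbit (F : X -> set X) (x : X) (s : nat -> X) : Prop :=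
  s 0%N = x /\ forall j, F (s j) (s j.+1).

Definition is_periodic (s : nat -> X) : Prop :=
  exists p : nat, (0 < p)%N /\ forall j, s (j + p)%N = s j.

Definition has_periodic_orbit (F : X -> set X) (x : X) : Prop :=
  exists s, is_orbit F x s /\ is_periodic s.

End SetValued.

Definition outer_of {d} {T : measurableType d} {R : realType}
  (mu : set T -> \bar R) (A : set T) : \bar R :=
  ereal_inf [set mu B | B in [set B : set T | measurable B /\ A `<=` B]].

Section Measures.
Context {R : realType} {X : ptopologicalType}.
Local Notation T := (BorelOf X).

(** mu(B) <= mu(F^{-1}(B)) for every Borel B (outer measure on the right,
    since F^{-1}(B) need not be Borel; it is universally measurable). *)
Definition F_invariant (F : X -> set X) (mu : probability T R) : Prop :=
  forall B : set T, measurable B -> (mu B <= outer_of mu (preimF F B))%E.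

Definition full_support (mu : probability T R) : Prop :=
  forall U : set X, open U -> U !=set0 -> (0 < mu U)%E.

(** Open sets of the weak* topology on Borel probability measures:
    generated by mu |-> \int f dmu, f : X -> R continuous. *)
Definition weak_open (W : set (probability T R)) : Prop :=
  forall mu, W mu ->
    exists (n : nat) (f : nat -> X -> R) (eps : R),
      (forall i, continuous (f i)) /\ 0 < eps /\
      (forall nu : probability T R,
         (forall i, (i < n)%N ->
            (`| \int[nu]_x (f i x)%:E - \int[mu]_x (f i x)%:E | < eps%:E)%E) ->
         W nu).

Definition weak_dense_in (P S : set (probability T R)) : Prop :=
  forall mu, P mu -> forall W, weak_open W -> W mu -> exists nu, S nu /\ W nu.

Definition weak_Gdelta_in (P S : set (probability T R)) : Prop :=
  exists Ws : nat -> set (probability T R),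
    (forall n, weak_open (Ws n)) /\ S = P `&` \bigcap_n Ws n.

End Measures.

From HB Require Import structures.
From mathcomp Require Import all_boot all_order all_algebra.
From mathcomp Require Import all_classical all_reals all_analysis.
From mathcomp Require Import measurable_realfun finmap.
From mathcomp Require Import ring lra.
Import Order.TTheory GRing.Theory Num.Theory.
Import numFieldNormedType.Exports.
Local Open Scope classical_set_scope.
Local Open Scope ring_scope.

(** The uniform measure on one period of a periodic orbit is F-invariant,
    since F^{-1}(B) contains the predecessor of every orbit point in B, and
    invariance survives countable convex combinations. X being compact
    metric, countably many balls B_k form a pi-base; weighting by 2^-(k+1)
    orbit measures of periodic orbits through the B_k gives an invariant nu
    of full support. Every invariant mu is then the weak* limit of the
    invariant, fully supported (1 - t) mu + t nu as t -> 0, and mu has full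
    support iff the integral of a continuous bump supported in B_k is
    positive for every k: a countable intersection of weak* open sets. *)

Section probability_of.
Context d (T : measurableType d) (R : realType) (m : {measure set T -> \bar R}).

(* The ignored argument carries the proof needed by the probability instance. *)
Definition probability_of (_ : m setT = 1%E) (A : set T) := m A.

Variable m1 : m setT = 1%E.

HB.instance Definition _ := isMeasure.Build _ _ _ (probability_of m1)
  (measure0 m) (@measure_ge0 _ _ _ m) (@measure_semi_sigma_additive _ _ _ m).
HB.instance Definition _ :=
  Measure_isProbability.Build _ _ _ (probability_of m1) m1.

End probability_of.
Arguments probability_of {d T R m}.

Section measure_constructions.
Context {R : realType} {d} {T : measurableType d}.

Definition cycle_measure (s : nat -> T) (p : nat) :=
  msum (fun j => mscale ((p%:R : R)^-1)%:nng (@dirac _ T (s j) R)) p.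

Definition geometric_mixture (mu : nat -> probability T R) :=
  mseries (fun k => mscale (((2:R)^-1) ^+ k.+1)%:nng (mu k)) 0.

Definition convex_mixture (t : R) (t0 : 0 <= t) (t1 : 0 <= 1 - t)
    (mu nu : probability T R) :=
  measure_add (mscale (NngNum t1) mu) (mscale (NngNum t0) nu).

Local Open Scope ereal_scope.

Lemma cycle_measure_setT s p : (0 < p)%N -> cycle_measure s p setT = 1.
Proof.
move=> p_gt0; rewrite /cycle_measure /msum /=.
under eq_bigr do rewrite /mscale /= diracT mule1.
by rewrite sumEFin sumr_const card_ord -mulr_natr mulVf // pnatr_eq0 -lt0n.
Qed.

Lemma cycle_measure_gt0 s p (A : set T) :
  (0 < p)%N -> A (s 0%N) -> 0 < cycle_measure s p A.
Proof.
case: p => [//|q] _ As0; rewrite /cycle_measure /msum /= big_ord_recl /=.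
apply: lte_paddr; first by apply: sume_ge0 => i _; exact: measure_ge0.
by rewrite /mscale /= diracE mem_set //= mul1e lte_fin invr_gt0 ltr0n.
Qed.

Lemma eseries_half_powers : \sum_(0 <= k <oo) (((2:R)^-1) ^+ k.+1)%:E = 1.
Proof.
have half_pow :
    (fun k => 1 / (2 ^ (k + 1))%N%:R)%R = (fun k => (2:R)^-1 ^+ k.+1)%R.
  by apply/funext => k; rewrite div1r natrX exprVn addn1.
have := @cvg_geometric_series_half R 1 0; rewrite half_pow expr0 divr1.
move=> cvg_half; apply/cvg_lim => //.
rewrite (_ : (fun n => _) = EFin \o series (fun k => ((2:R)^-1) ^+ k.+1)%R).
  by apply: cvg_EFin; [exact: nearW | exact: cvg_half].
by apply/funext => n; rewrite /series /= sumEFin.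
Qed.

Lemma geometric_mixture_setT (mu : nat -> probability T R) :
  geometric_mixture mu setT = 1.
Proof.
rewrite /geometric_mixture /mseries /= -eseries_half_powers.
by apply: eq_eseriesr => k _; rewrite /mscale /= probability_setT mule1.
Qed.

Lemma geometric_mixture_gt0 (mu : nat -> probability T R) k (A : set T) :
  measurable A -> 0 < mu k A -> 0 < geometric_mixture mu A.
Proof.
move=> mA muA; rewrite /geometric_mixture /mseries /=.
apply: (@lt_le_trans _ _ (mscale (((2:R)^-1 ^+ k.+1)%:nng)%R (mu k) A)).
  by rewrite /mscale /= mule_gt0 // lte_fin exprn_gt0.
apply: le_trans (nneseries_lim_ge k.+1 _) => [|n _ _]; last exact: measure_ge0.
rewrite big_nat_recr //= leeDr //; apply: sume_ge0 => n _; exact: measure_ge0.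
Qed.

Lemma convex_mixtureE t t0 t1 (mu nu : probability T R) A :
  @convex_mixture t t0 t1 mu nu A = (1 - t)%:E * mu A + t%:E * nu A.
Proof. by rewrite /convex_mixture measure_addE. Qed.

Lemma convex_mixture_setT t t0 t1 (mu nu : probability T R) :
  @convex_mixture t t0 t1 mu nu setT = 1.
Proof. by rewrite convex_mixtureE !probability_setT !mule1 -EFinD subrK. Qed.

End measure_constructions.

Lemma big_ord_shift_periodic {A I : Type} {idx : A} {op : Monoid.com_law idx}
    (f : I -> A) (s : nat -> I) p :
  (forall j, s (j + p)%N = s j) ->
  \big[op/idx]_(j < p) f (s j.+1) = \big[op/idx]_(j < p) f (s j).
Proof.
case: p => [|q] per; first by rewrite !big_ord0.
by rewrite big_ord_recr big_ord_recl /= -(per 0%N) add0n Monoid.mulmC.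
Qed.

Section preimF_monotone.
Context {R : realType} {X : ptopologicalType} (F : X -> set X).
Local Notation T := (BorelOf X).
Local Open Scope ereal_scope.

Definition preimF_monotone (mu : set T -> \bar R) := forall B C : set T,
  measurable B -> measurable C -> preimF F B `<=` C -> mu B <= mu C.

Lemma F_invariantP (mu : probability T R) :
  F_invariant F mu <-> preimF_monotone mu.
Proof.
split=> [inv B C mB mC BC | mono B mB].
  by apply: le_trans (inv B mB) _; apply: ereal_inf_lbound; exists C.
by apply: le_ereal_inf_tmp => _ [C [mC BC] <-]; exact: mono.
Qed.

Lemma cycle_measure_preimF_monotone (s : nat -> T) p :
  (forall j, s (j + p)%N = s j) -> (forall j, F (s j) (s j.+1)) ->
  preimF_monotone (cycle_measure s p).
Proof.
move=> per orb B C mB mC BC; rewrite /cycle_measure /msum /=.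
rewrite -(big_ord_shift_periodic (fun x => mscale _ \d_x B) _ _ per).
apply: lee_sum => j _; apply: lee_wpmul2l; first by rewrite lee_fin.
rewrite /= !diracE; have [Bsj|] := boolP (s j.+1 \in B); last by rewrite lee_fin.
suff /mem_set -> : C (s j) by [].
by apply: BC; exists (s j.+1); split; [exact: orb | exact/set_mem].
Qed.

Lemma geometric_mixture_preimF_monotone (mu : nat -> probability T R) :
  (forall k, preimF_monotone (mu k)) -> preimF_monotone (geometric_mixture mu).
Proof.
move=> mono B C mB mC BC; apply: lee_nneseries => [k _ _|k _].
  exact: measure_ge0.
by apply: lee_wpmul2l; [rewrite lee_fin | exact: mono].
Qed.

Lemma convex_mixture_preimF_monotone t t0 t1 (mu nu : probability T R) :
  preimF_monotone mu -> preimF_monotone nu ->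
  preimF_monotone (@convex_mixture _ _ _ t t0 t1 mu nu).
Proof.
move=> mono_mu mono_nu B C mB mC BC; rewrite !convex_mixtureE.
by apply: leeD; apply: lee_wpmul2l; rewrite ?lee_fin //;
  [exact: mono_mu | exact: mono_nu].
Qed.

End preimF_monotone.

Section bounded_integrals.
Context {R : realType} {d} {T : measurableType d}.
Local Open Scope ereal_scope.

Lemma integral_mscale (m : {measure set T -> \bar R}) (k : {nonneg R})
    (f : T -> \bar R) :
  m.-integrable setT f -> \int[mscale k m]_x f x = k%:num%:E * \int[m]_x f x.
Proof.
move=> fi; have mf := measurable_int _ fi.
rewrite [LHS]integralE [in RHS]integralE.
rewrite !ge0_integral_mscale //;
  [|exact: measurable_funeneg|exact: measurable_funepos].
rewrite [RHS]muleBr //; apply: fin_num_adde_defr; exact: integrable_pos_fin_num.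
Qed.

Lemma bounded_integrable (m : {measure set T -> \bar R}) {f : T -> R} {M : R} :
  m setT < +oo -> measurable_fun setT f -> (forall x, `|f x| <= M)%R ->
  m.-integrable setT (EFin \o f).
Proof.
move=> mT mf fM; apply: measurable_bounded_integrable => //.
exists M; split; first exact: num_real.
by move=> y /ltW My x _; exact: le_trans (fM x) My.
Qed.

Lemma probability_integral_bounded (mu : probability T R) {f : T -> R} {M : R} :
  measurable_fun setT f -> (forall x, `|f x| <= M)%R ->
  exists2 a : R, \int[mu]_x (f x)%:E = a%:E & (`|a| <= M)%R.
Proof.
move=> mf fM; have fi : mu.-integrable setT (EFin \o f).
  apply: (bounded_integrable _ _ mf fM).
  exact: le_lt_trans (probability_le1 mu measurableT) (ltry _).
have fin := integrable_fin_num measurableT fi.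
exists (fine (\int[mu]_x (f x)%:E)); first by rewrite fineK.
rewrite -lee_fin -abse_EFin fineK //.
apply: le_trans (le_abse_integral _ _ _) _ => //; first exact/measurable_EFinP.
rewrite -[leRHS]mule1 -(probability_setT mu).
apply: integral_le_bound => //; first exact: measurableT_comp.
  by rewrite lee_fin (le_trans _ (fM point)).
by apply: aeW => x _; rewrite lee_fin.
Qed.

Lemma integral_convex_mixture t t0 t1 (mu nu : probability T R)
    {f : T -> R} {M : R} :
  measurable_fun setT f -> (forall x, `|f x| <= M)%R ->
  \int[@convex_mixture _ _ _ t t0 t1 mu nu]_x (f x)%:E =
  (1 - t)%:E * \int[mu]_x (f x)%:E + t%:E * \int[nu]_x (f x)%:E.
Proof.
move=> mf fM.
have fi (m : probability T R) : m.-integrable setT (EFin \o f).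
  apply: (bounded_integrable _ _ mf fM).
  exact: le_lt_trans (probability_le1 m measurableT) (ltry _).
have fsi (k : {nonneg R}) (m : probability T R) :
    (mscale k m).-integrable setT (EFin \o f).
  apply: (bounded_integrable _ _ mf fM); rewrite /= lte_mul_pinfty //.
  exact: le_lt_trans (probability_le1 m measurableT) (ltry _).
rewrite integral_measure_add //; [congr (_ + _) | exact: fsi | exact: fsi].
- exact: (@integral_mscale mu _ _ (fi mu)).
- exact: (@integral_mscale nu _ _ (fi nu)).
Qed.

End bounded_integrals.

Section balls.
Context {R : realType} {X : pseudoPMetricType R}.

Lemma finite_ball_cover (r : R) : compact [set: X] -> 0 < r ->
  exists D : {fset X}, [set: X] `<=` cover [set` D] (fun c => (ball c r)°).
Proof.
rewrite compact_cover => /(_ X setT (fun c => (ball c r)°)) cover_fin r_gt0.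
case: cover_fin => [c _|x _|D _ DX]; [exact: open_interior| |by exists D].
by exists x => //; exact: nbhsx_ballx.
Qed.

Lemma countable_ball_base : compact [set: X] ->
  exists (c : nat -> X) (r : nat -> R), (forall k, 0 < r k) /\
    forall U : set X, open U -> U !=set0 -> exists k, ball (c k) (r k) `<=` U.
Proof.
move=> cX; pose rad n : R := n.+1%:R^-1.
have rad_gt0 n : 0 < rad n by rewrite invr_gt0.
have [D DX] := choice (fun n => finite_ball_cover _ cX (rad_gt0 n)).
(* k encodes a pair (n, i): the i-th center of a finite 1/(n+1)-net. *)
pose cr k : X * R := if choice.unpickle k is Some (n, i)
  then (nth point (enum_fset (D n)) i, rad n) else (point, 1).
exists (fun k => (cr k).1), (fun k => (cr k).2); split.
  by move=> k; rewrite /cr; case: choice.unpickle => [[n i]|];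
    [exact: rad_gt0 | exact: ltr01].
move=> U + [x Ux]; rewrite openE => /(_ x Ux) /nbhs_ballP[e e_gt0 xeU].
have [N _ radN] := near_infty_natSinv_lt (PosNum (divr_gt0 e_gt0 (@ltr0Sn R 1))).
have radNe : rad N < e / 2 := radN N (leqnn N).
have [c Dc xc] := DX N x I.
exists (choice.pickle (N, index c (enum_fset (D N)))).
rewrite /cr choice.pickleK /= nth_index // => y cy; apply: xeU.
apply: (@le_ball _ _ _ (rad N + rad N)).
  by rewrite [e](splitr e) lerD // ltW.
by apply: ball_triangle cy; apply: ball_sym; exact: interior_subset xc.
Qed.

Definition bump (c : X) (r : R) : X -> R :=
  fun x => 1 - Urysohn [set c] (~` (ball c r)°) x.

Let bump_separator (c : X) (r : R) :
  0 < r -> uniform_separator [set c] (~` (ball c r)°).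
Proof.
move=> r_gt0; apply: (@point_uniform_separator R).
  by apply: open_closedC; exact: open_interior.
by move=> /(_ (nbhsx_ballx c _ r_gt0)).
Qed.

Lemma bump_continuous c r : continuous (bump c r).
Proof.
by move=> x; apply: continuousB; [exact: cvg_cst | exact: Urysohn_continuous].
Qed.

Lemma bump_ge0 c r x : 0 <= bump c r x.
Proof.
have := @Urysohn_range X R [set c] (~` (ball c r)°) _ (ex_intro2 _ _ x I erefl).
by rewrite /= in_itv /= subr_ge0 => /andP[].
Qed.

Lemma bump_le1 c r x : bump c r x <= 1.
Proof.
have := @Urysohn_range X R [set c] (~` (ball c r)°) _ (ex_intro2 _ _ x I erefl).
by rewrite /= in_itv /= lerBlDr lerDl => /andP[].
Qed.

Lemma bump_center c r : 0 < r -> bump c r c = 1.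
Proof.
move=> r_gt0; rewrite /bump.
rewrite (@Urysohn_sub0 _ _ _ _ (bump_separator c _ r_gt0) (Urysohn _ _ c)).
  by rewrite subr0.
by exists c.
Qed.

Lemma bump_eq0 c r x : 0 < r -> ~ ball c r x -> bump c r x = 0.
Proof.
move=> r_gt0 cx; rewrite /bump.
rewrite (@Urysohn_sub1 _ _ _ _ (bump_separator c _ r_gt0) (Urysohn _ _ x)).
  by rewrite subrr.
by exists x => // /interior_subset.
Qed.

Lemma continuous_family_bounded (f : nat -> X -> R) n : compact [set: X] ->
  (forall i, continuous (f i)) ->
  exists2 M : R, 0 <= M & forall i x, (i < n)%N -> `|f i x| <= M.
Proof.
move=> cX f_cont; elim: n => [|n [M M_ge0 fM]]; first by exists 0.
have /compact_bounded := continuous_compact (continuous_subspaceT (f_cont n)) cX.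
case/pinfty_ex_gt0 => Mn Mn_gt0 fnM.
exists (Num.max M Mn); first by rewrite le_max M_ge0.
move=> i x; rewrite ltnS leq_eqVlt => /orP[/eqP-> | /fM fiM].
  by rewrite le_max fnM ?orbT //; exists x.
by rewrite le_max fiM.
Qed.

End balls.

Section Borel.
Context {R : realType} {X : pseudoPMetricType R}.
Local Notation T := (BorelOf X).

Lemma measurable_open {U : set X} : open U -> measurable (U : set T).
Proof. exact: sub_sigma_algebra. Qed.

Lemma continuous_Borel_measurable {f : X -> R} :
  continuous f -> measurable_fun [set: T] f.
Proof.
move=> /continuousP f_cont.
apply: (measurability _ (measurable_realfun.RGenOpens.measurableE R)).
move=> _ [_ [a [b ->] <-]]; rewrite setTI; apply: measurable_open.
exact/f_cont/interval_open.
Qed.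

Local Open Scope ereal_scope.

Lemma full_support_integral_gt0 (mu : probability T R) (g : X -> R) (x0 : X) :
  full_support mu -> continuous g -> (forall x, 0 <= g x)%R -> (0 < g x0)%R ->
  0 < \int[mu]_x (g x)%:E.
Proof.
move=> mu_full g_cont g_ge0 gx0_gt0.
pose O := g @^-1` `](g x0 / 2)%R, +oo[.
have O_open : open O.
  by apply: (proj1 (continuousP g) g_cont); exact: interval_open.
have mO := measurable_open O_open.
have muO : 0 < mu O.
  apply: mu_full => //; exists x0.
  by rewrite /O /= in_itv /= andbT ltr_pdivrMr // ltr_pMr // ltr1n.
have mg : measurable_fun [set: T] (EFin \o g).
  by apply/measurable_EFinP; exact: continuous_Borel_measurable.
apply: (@lt_le_trans _ _ (\int[mu]_(x in (O : set T)) (g x0 / 2)%:E)).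
  by rewrite integral_cst // mule_gt0 // lte_fin divr_gt0.
apply: (@le_trans _ _ (\int[mu]_(x in (O : set T)) (g x)%:E)).
  apply: ge0_le_integral => //; first by move=> x _; rewrite lee_fin divr_ge0.
    exact: measurable_funS mg.
  by move=> x; rewrite /O /= in_itv /= andbT lee_fin => /ltW.
by apply: ge0_subset_integral => //= x _; rewrite lee_fin.
Qed.

Lemma integral_gt0_measure_gt0 (mu : probability T R) (g : X -> R) (U : set T) :
  measurable U -> continuous g -> (forall x, 0 <= g x <= 1)%R ->
  (forall x, ~ U x -> g x = 0%R) -> 0 < \int[mu]_x (g x)%:E -> 0 < mu U.
Proof.
move=> mU g_cont g01 gU intg_gt0; apply: (lt_le_trans intg_gt0).
rewrite -[X in _ <= mu X](setIT U) -integral_indic //.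
apply: ge0_le_integral => //.
- by move=> x _; rewrite lee_fin; case/andP: (g01 x).
- by apply/measurable_EFinP; exact: continuous_Borel_measurable.
- by apply/measurable_EFinP; exact: measurable_indic.
move=> x _; rewrite lee_fin indicE; have [/set_mem Ux|/negP Ux] := boolP (x \in U).
  by case/andP: (g01 x).
by rewrite gU //; move/mem_set.
Qed.

Lemma full_support_bumpsP {c : nat -> X} {r : nat -> R} (mu : probability T R) :
  (forall k, 0 < r k)%R ->
  (forall U : set X, open U -> U !=set0 -> exists k, ball (c k) (r k) `<=` U) ->
  full_support mu <-> forall k, 0 < \int[mu]_x (bump (c k) (r k) x)%:E.
Proof.
move=> r_gt0 base; split=> [mu_full k | bump_gt0 U U_open U_neq0].
  apply: (full_support_integral_gt0 mu _ (c k) mu_full).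
  - exact: bump_continuous.
  - exact: bump_ge0.
  by rewrite bump_center // ltr01.
have [k cU] := base U U_open U_neq0.
have := bump_gt0 k; apply: integral_gt0_measure_gt0.
- exact: measurable_open.
- exact: bump_continuous.
- by move=> x; rewrite bump_ge0 bump_le1.
by move=> x Ux; apply: bump_eq0 => // /cU.
Qed.

End Borel.

Lemma dist_convex_comb_lt (R : realFieldType) (M eps t a b : R) :
  0 <= t -> t * (2 * M) < eps -> `|a| <= M -> `|b| <= M ->
  `|(1 - t) * a + t * b - a| < eps.
Proof.
move=> t_ge0 tM_lt aM bM.
have -> : (1 - t) * a + t * b - a = t * (b - a) by ring.
rewrite normrM ger0_norm //; apply: le_lt_trans tM_lt.
by rewrite ler_wpM2l //; apply: le_trans (ler_normB _ _) _; lra.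
Qed.

Section weak_topology.
Context {R : realType} {X : pseudoPMetricType R}.
Local Notation T := (BorelOf X).
Hypothesis cX : compact [set: X].

Lemma weak_open_integral_gt0 (g : X -> R) (M : R) :
  continuous g -> (forall x, `|g x| <= M)%R ->
  weak_open [set mu : probability T R | (0 < \int[mu]_x (g x)%:E)%E].
Proof.
move=> g_cont gM mu /=; have mg := continuous_Borel_measurable g_cont.
have [a mua _] := probability_integral_bounded mu mg gM.
rewrite mua lte_fin => a_gt0.
exists 1%N, (fun=> g), a; split=> //; split=> // nu /(_ 0%N isT).
have [b -> _] := probability_integral_bounded nu mg gM.
rewrite mua -EFinB abse_EFin !lte_fin ltr_norml => /andP[+ _].
by rewrite ltrBrDr addNr.
Qed.

Lemma weak_open_convex_mixture {W : set (probability T R)} {mu : probability T R}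
    (nu : probability T R) : weak_open W -> W mu ->
  exists t (t0 : (0 <= t)%R) (t1 : (0 <= 1 - t)%R),
    (0 < t)%R /\ W (probability_of (convex_mixture_setT _ t0 t1 mu nu)).
Proof.
move=> W_open Wmu.
have [n [f [eps [f_cont [eps_gt0 near_mu]]]]] := W_open mu Wmu.
have [M M_ge0 fM] := continuous_family_bounded _ n cX f_cont.
pose t := (eps / (2 * (M + eps)))%R.
have den_gt0 : (0 < 2 * (M + eps))%R by lra.
have t_gt0 : (0 < t)%R by rewrite divr_gt0.
have t1 : (0 <= 1 - t)%R by rewrite subr_ge0 ler_pdivrMr // mul1r; lra.
have tM_lt : (t * (2 * M) < eps)%R.
  by rewrite mulrAC ltr_pdivrMr // ltr_pM2l //; lra.
exists t, (ltW t_gt0), t1; split => //; apply: near_mu => i ni.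
have mf := continuous_Borel_measurable (f_cont i).
have [a mua aM] := probability_integral_bounded mu mf (fM i ^~ ni).
have [b nub bM] := probability_integral_bounded nu mf (fM i ^~ ni).
have mix : (\int[probability_of (convex_mixture_setT _ (ltW t_gt0) t1 mu nu)]_x
    (f i x)%:E = ((1 - t) * a + t * b)%:E)%E.
  rewrite EFinD !EFinM -mua -nub.
  exact: (integral_convex_mixture _ _ _ _ _ mf (fM i ^~ ni)).
rewrite mix mua -EFinB abse_EFin lte_fin.
exact: dist_convex_comb_lt (ltW t_gt0) tM_lt aM bM.
Qed.

End weak_topology.

Section invariant_measures.
Context {R : realType} {X : pseudoPMetricType R} (F : X -> set X).
Local Notation T := (BorelOf X).
Hypothesis cX : compact [set: X].

Lemma exists_invariant_full_support : dense [set x | has_periodic_orbit F x] ->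
  exists nu : probability T R, F_invariant F nu /\ full_support nu.
Proof.
move=> per_dense; have [c [r [r_gt0 base]]] := countable_ball_base cX.
have orbit_in k : exists sp : (nat -> T) * nat,
    [/\ (ball (c k) (r k))° (sp.1 0%N), (0 < sp.2)%N,
         forall j, sp.1 (j + sp.2)%N = sp.1 j & forall j, F (sp.1 j) (sp.1 j.+1)].
  have [|x [Bx [s [[s0 orb] [p [p_gt0 per]]]]]] :=
    per_dense _ _ (@open_interior _ (ball (c k) (r k))).
    by exists (c k); exact: nbhsx_ballx.
  by exists (s, p); split => //=; rewrite s0.
have [sp /all_and4[s_in p_gt0 per orb]] := choice orbit_in.
pose mu k : probability T R :=
  probability_of (cycle_measure_setT (sp k).1 _ (p_gt0 k)).
exists (probability_of (geometric_mixture_setT mu)); split.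
  apply/F_invariantP; apply: geometric_mixture_preimF_monotone => k.
  exact: cycle_measure_preimF_monotone.
move=> U U_open U_neq0; have [k cU] := base U U_open U_neq0.
apply: (@geometric_mixture_gt0 _ _ _ mu k); first exact: measurable_open.
apply: cycle_measure_gt0; first exact: p_gt0.
by apply: cU; apply: interior_subset; exact: s_in.
Qed.

Lemma invariant_full_support_weak_dense (nu : probability T R) :
  F_invariant F nu -> full_support nu ->
  weak_dense_in [set mu : probability T R | F_invariant F mu]
    [set mu | F_invariant F mu /\ full_support mu].
Proof.
move=> /F_invariantP nu_inv nu_full mu /F_invariantP mu_inv W W_open Wmu.
have [t [t0 [t1 [t_gt0 Wmix]]]] := weak_open_convex_mixture cX nu W_open Wmu.
exists (probability_of (convex_mixture_setT _ t0 t1 mu nu)); split => //; split.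
  by apply/F_invariantP; exact: convex_mixture_preimF_monotone.
move=> U U_open U_neq0.
rewrite -[X in (_ < X)%E]/(@convex_mixture _ _ _ t t0 t1 mu nu U) convex_mixtureE.
apply: (@lt_le_trans _ _ (t%:E * nu U)%E); first by rewrite mule_gt0 // nu_full.
by rewrite leeDr // mule_ge0.
Qed.

Lemma invariant_full_support_Gdelta :
  weak_Gdelta_in [set mu : probability T R | F_invariant F mu]
    [set mu | F_invariant F mu /\ full_support mu].
Proof.
have [c [r [r_gt0 base]]] := countable_ball_base cX.
exists (fun k => [set mu : probability T R |
  (0 < \int[mu]_x (bump (c k) (r k) x)%:E)%E]); split.
  move=> k; apply: (@weak_open_integral_gt0 _ _ _ 1%R).
    exact: bump_continuous.
  by move=> x; rewrite ger0_norm ?bump_ge0 ?bump_le1.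
apply/seteqP; split=> mu /= [mu_inv mu_full]; split => //.
  by move=> k _; exact: (full_support_bumpsP mu r_gt0 base).1 mu_full k.
by apply/(full_support_bumpsP mu r_gt0 base) => k; exact: mu_full k I.
Qed.

End invariant_measures.

Theorem theorem14 (R : realType) (X : pseudoPMetricType R)
  (F : X -> set X) :
  hausdorff_space X ->
  compact [set: X] ->
  set_valued_map F ->
  dense [set x | has_periodic_orbit F x] ->
  (exists mu : probability (BorelOf X) R, F_invariant F mu /\ full_support mu) /\
  (weak_dense_in [set mu : probability (BorelOf X) R | F_invariant F mu]
     [set mu | F_invariant F mu /\ full_support mu] /\
   weak_Gdelta_in [set mu : probability (BorelOf X) R | F_invariant F mu]
     [set mu | F_invariant F mu /\ full_support mu]).
Proof.
move=> _ cX _ per_dense.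
have [nu [nu_inv nu_full]] := exists_invariant_full_support F cX per_dense.
split; first by exists nu.
split; first exact: (invariant_full_support_weak_dense _ cX _ nu_inv nu_full).
exact: (invariant_full_support_Gdelta _ cX).
Qed.
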